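(* Suppose that $G$ is a finite group, $x\in G$ has prime order, and $\mathrm{Sub}_G(x)$ is a proper core-free subgroup of $G$. Then for every proper subgroup $H$ of $G$ with $\mathrm{Sub}_G(x)\le H$, $x$ is quasi-semiregular in the action of $G$ on the right cosets $[G:H]$.
   Context: For $x\in G$, the subnormaliser is $\mathrm{Sub}_G(x)=\langle g\in G : \langle x\rangle \text{ is subnormal in } \langle x,g\rangle\rangle$. A subgroup is core-free if it contains no nontrivial normal subgroup of $G$. A permutation $g$ is quasi-semiregular if $\langle g\rangle$ has a unique fixed point and acts semiregularly (only the identity fixes a point) on the remaining points. *)

From mathcomp Require Import all_boot all_fingroup all_solvable.
Set Implicit Arguments. Unset Strict Implicit. Unset Printing Implicit Defensive.
Local Open Scope group_scope.

Definition subnormaliser (gT : finGroupType) (G : {set gT}) (x : gT) : {set gT} :=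
  <<[set g in G | <[x]> <|<| (<[x]> <*> <[g]>)]>>.

Definition core_free (gT : finGroupType) (H G : {set gT}) : Prop :=
  forall N : {group gT}, N <| G -> N \subset H -> N :=: 1.

Definition quasi_semiregular_on_cosets (gT : finGroupType) (G H : {set gT})
    (x : gT) : Prop :=
  exists a : {set gT},
    'Fix_(rcosets H G | 'Rs)(<[x]>) = [set a] /\
    (forall b, b \in rcosets H G -> b != a -> 'C_(<[x]>)[b | 'Rs] = 1).

From mathcomp Require Import all_boot all_fingroup all_solvable.
Set Implicit Arguments. Unset Strict Implicit. Unset Printing Implicit Defensive.
Local Open Scope group_scope.

(* A Sylow p-subgroup P of G through the p-element x lies in Sub_G(x), together
   with its normaliser, because <x> is subnormal in the nilpotent group P.  A
   Frattini-type argument then shows that if x^(g^-1) lies in a subgroup H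
   containing Sub_G(x), then g lies in H: a Sylow subgroup of H (which is Sylow
   in G) through x^(g^-1) is carried by some h*g, h in H, to one through x, and
   two Sylow subgroups through x are conjugate inside Sub_G(x).  Hence H is the
   only coset of [G:H] fixed by x, and as <x> has prime order every other coset
   has trivial stabiliser in <x>. *)

Section Subnormaliser.

Variables (gT : finGroupType) (G : {group gT}) (x : gT).

Lemma subnormaliser_subG : subnormaliser G x \subset G.
Proof. by rewrite gen_subG; apply/subsetP => g /setIdP[]. Qed.

Lemma norm_nilpotent_sub_subnormaliser (Q : {group gT}) :
  nilpotent Q -> x \in Q -> 'N_G(Q) \subset subnormaliser G x.
Proof.
move=> nilQ xQ; apply/subsetP => g /setIP[gG nQg]; apply: mem_gen.
rewrite inE gG /=.
have snxN : <[x]> <|<| 'N(Q).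
  apply: subnormal_trans (normal_subnormal (normalG Q)).
  by apply: nilpotent_subnormal nilQ _; rewrite cycle_subG.
have sxgN : <[x]> <*> <[g]> \subset 'N(Q).
  by rewrite join_subG !cycle_subG nQg (subsetP (normG Q)).
by have := setI_subnormal sxgN snxN; rewrite (setIidPl (joing_subl _ _)).
Qed.

Lemma mem_subnormaliser : x \in G -> x \in subnormaliser G x.
Proof.
move=> xG; have nilX := abelian_nil (cycle_abelian x).
apply: (subsetP (norm_nilpotent_sub_subnormaliser nilX (cycle_id x))).
by rewrite inE xG (subsetP (normG _)) ?cycle_id.
Qed.

Lemma pgroup_sub_subnormaliser (p : nat) (P : {group gT}) :
  p.-group P -> P \subset G -> x \in P -> P \subset subnormaliser G x.
Proof.
move=> pP sPG xP.
apply: subset_trans _ (norm_nilpotent_sub_subnormaliser (pgroup_nil pP) xP).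
by rewrite subsetI sPG normG.
Qed.

Lemma Sylow_sub_subnormaliser (p : nat) (P : {group gT}) :
  p.-Sylow(G) P -> x \in P -> p.-Sylow(subnormaliser G x) P.
Proof.
move=> sylP xP; apply: (pHall_subl _ subnormaliser_subG sylP).
exact: pgroup_sub_subnormaliser (pHall_pgroup sylP) (pHall_sub sylP) xP.
Qed.

Lemma conj_Sylow_subnormaliser (p : nat) (P : {group gT}) m :
  p.-Sylow(G) P -> x \in P -> m \in G -> x \in P :^ m ->
  m \in subnormaliser G x.
Proof.
move=> sylP xP mG xPm.
have sylPm : p.-Sylow(G) (P :^ m) by rewrite pHallJ.
have [s sS ePs] := Sylow_trans (Sylow_sub_subnormaliser sylP xP)
  (Sylow_sub_subnormaliser sylPm xPm).
have sG : s \in G := subsetP subnormaliser_subG s sS.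
have nPS := norm_nilpotent_sub_subnormaliser (pgroup_nil (pHall_pgroup sylP)) xP.
have nPms : m * s^-1 \in 'N_G(P).
  rewrite inE groupM ?groupV //=; apply/normP.
  by rewrite conjsgM ePs -conjsgM mulgV conjsg1.
by rewrite -(mulgKV s m) groupM // (subsetP nPS).
Qed.

Variables (p : nat) (H : {group gT}).
Hypotheses (xG : x \in G) (p_x : p.-elt x).
Hypotheses (sSH : subnormaliser G x \subset H) (sHG : H \subset G).

Lemma subnormaliser_mem_conjV g : g \in G -> x ^ g^-1 \in H -> g \in H.
Proof.
move=> gG xgH; have sxG : <[x]> \subset G by rewrite cycle_subG.
have [P sylP sxP] := Sylow_superset sxG p_x.
have xP : x \in P by rewrite -cycle_subG.
have sPS := pgroup_sub_subnormaliser (pHall_pgroup sylP) (pHall_sub sylP) xP.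
have sylPH : p.-Sylow(H) P := pHall_subl (subset_trans sPS sSH) sHG sylP.
have [h hH sxgPh] : exists2 h, h \in H & <[x ^ g^-1]> \subset P :^ h.
  apply: Sylow_subJ sylPH _ _; first by rewrite cycle_subG.
  by have := p_x; rewrite -(p_eltJ p x g^-1).
have xPhg : x \in P :^ (h * g).
  by rewrite conjsgM -(conjgKV g x) memJ_conjg -cycle_subG.
have hgS : h * g \in subnormaliser G x.
  exact: conj_Sylow_subnormaliser sylP xP (groupM (subsetP sHG h hH) gG) xPhg.
by rewrite -(mulKg h g) groupM ?groupV // (subsetP sSH).
Qed.

Lemma Fix_rcosets_subnormaliser :
  'Fix_(rcosets H G | 'Rs)(<[x]>) = [set H : {set gT}].
Proof.
have xH := subsetP sSH x (mem_subnormaliser xG).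
apply/setP => b; rewrite !inE; apply/andP/eqP => [[/rcosetsP[g gG ->] fixHg] | ->].
  have := subsetP fixHg x (cycle_id x); rewrite inE /= rcosetE -rcosetM.
  move=> /eqP HgxE; have : g * x \in H :* g by rewrite -HgxE rcoset_refl.
  rewrite mem_rcoset => gxgV; rewrite rcoset_id // subnormaliser_mem_conjV //.
  by rewrite conjgE invgK mulgA.
split; first by apply/rcosetsP; exists 1; rewrite ?mulg1.
apply/subsetP => a xa; rewrite inE /= rcosetE rcoset_id //.
by rewrite (subsetP _ a xa) // cycle_subG.
Qed.

End Subnormaliser.

Theorem corollary3p4 (gT : finGroupType) (G : {group gT}) (x : gT) :
  x \in G -> prime #[x] ->
  subnormaliser G x \proper G -> core_free (subnormaliser G x) G ->
  forall H : {group gT}, H \proper G -> subnormaliser G x \subset H ->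
    quasi_semiregular_on_cosets G H x.
Proof.
move=> xG prx _ _ H /andP[sHG _] sSH.
have fixH := Fix_rcosets_subnormaliser xG (pnat_id prx) sSH sHG.
exists (H : {set gT}); split=> // b bHG bH'.
apply: prime_TIg; first by rewrite -orderE.
rewrite sub_astab1; apply: contra bH' => fixb.
by rewrite -in_set1 -fixH inE bHG.
Qed.
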